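(* Let $z\in\mathbb{R}^n$ satisfy $\dim\big(\Diamond_n\cap(z+\Diamond_n)\big)=n$. Then $$\big(\Diamond_n\cap(z+\Diamond_n)\big)\setminus\big(\operatorname{int}(\Diamond_n)\cup\operatorname{int}(z+\Diamond_n)\big)\subset\big(\Diamond_n\cap(z+\Diamond_n)\big)\setminus\bigcap_{i=1}^n\big(H^{(i)}\cup(z+H^{(i)})\big).$$
   Context: $\Diamond_n=\operatorname{conv}(\pm e_1,\ldots,\pm e_n)\subset\mathbb{R}^n$; $\operatorname{int}$ denotes interior; $H^{(i)}=\{x\in\mathbb{R}^n: x_i=0\}$ is the $i$-th coordinate hyperplane, the span of $e_j$, $j\ne i$. *)

From HB Require Import structures.
From mathcomp Require Import all_boot all_order all_algebra.
From mathcomp Require Import all_classical all_reals all_analysis.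
Set Implicit Arguments. Unset Strict Implicit. Unset Printing Implicit Defensive.
Import Order.TTheory GRing.Theory Num.Theory.
Import numFieldNormedType.Exports.
Local Open Scope classical_set_scope.
Local Open Scope ring_scope.

Definition conv_fin (R : realType) (n : nat) (I : finType) (v : I -> 'rV[R]_n)
  : set 'rV[R]_n :=
  [set x | exists w : I -> R, (forall i, 0 <= w i) /\ \sum_i w i = 1 /\
            x = \sum_i w i *: v i].

Definition stdbasis (R : realType) (n : nat) (i : 'I_n) : 'rV[R]_n :=
  \row_j (i == j)%:R.

Definition cross_vertex (R : realType) (n : nat) (p : 'I_n * bool) : 'rV[R]_n :=
  (if p.2 then 1 else -1) *: stdbasis R p.1.

Definition crosspolytope (R : realType) (n : nat) : set 'rV[R]_n :=
  conv_fin (@cross_vertex R n).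

Definition translate (R : realType) (n : nat) (z : 'rV[R]_n) (S : set 'rV[R]_n)
  : set 'rV[R]_n := [set z + y | y in S].

Definition coord_hyperplane (R : realType) (n : nat) (i : 'I_n) : set 'rV[R]_n :=
  [set x | x ord0 i = 0].

(* dim S = n : the affine hull of S is all of R^n, i.e. S contains n+1
   affinely independent points p_0,...,p_n (p_i - p_0 linearly independent). *)
Definition full_dim (R : realType) (n : nat) (S : set 'rV[R]_n) : Prop :=
  exists p : 'I_n.+1 -> 'rV[R]_n, (forall i, S (p i)) /\
    row_free (\matrix_(i < n) (p (lift ord0 i) - p ord0)).

From HB Require Import structures.
From mathcomp Require Import all_boot all_order all_algebra.
From mathcomp Require Import all_classical all_reals all_analysis.
From mathcomp Require Import lra.
Import Order.TTheory GRing.Theory Num.Theory.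
Import numFieldNormedType.Exports.
Local Open Scope classical_set_scope.
Local Open Scope ring_scope.

(* The cross-polytope is the closed unit ball of the l1 norm, so a point x of
   the intersection lying on the boundary of both bodies has |x|_1 = 1 and
   |x - z|_1 = 1.  If moreover every coordinate of x is 0 or z_j, these two
   l1 norms add up to |z|_1, hence |z|_1 = 2.  But then every u in the
   intersection satisfies |u|_1 + |u - z|_1 <= |z|_1, i.e. equality in the
   triangle inequality coordinatewise, which forces sum_j sg(z_j) u_j = 1:
   the intersection lies in an affine hyperplane and is not full-dimensional. *)

Lemma sgr_mul_between (R : realDomainType) (a b : R) :
  `|b| + `|b - a| = `|a| -> Num.sg a * b = `|b|.
Proof.
have [a0|a0|->] := ltrgt0P a;
  rewrite ?(gtr0_sg a0) ?(ltr0_sg a0) ?sgr0 ?subr0 ?normr0;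
have [b0|b0|->] := ltrgt0P b; rewrite ?normr0 ?mul0r ?mul1r ?mulN1r //;
rewrite ?(gtr0_norm a0) ?(ltr0_norm a0) ?(gtr0_norm b0) ?(ltr0_norm b0);
have [c0|c0|c0] := ltrgt0P (b - a);
rewrite ?(gtr0_norm c0) ?(ltr0_norm c0) ?c0 ?normr0; lra.
Qed.

Section L1Ball.
Context {R : realType} {n : nat}.
Set Implicit Arguments. Unset Strict Implicit.
Implicit Types (u x y c z : 'rV[R]_n).

Definition norm1 u : R := \sum_j `|u ord0 j|.

Definition l1ball c : set 'rV[R]_n := [set u | norm1 (u - c) <= 1].

Lemma norm1B u v : norm1 (u - v) = \sum_j `|u ord0 j - v ord0 j|.
Proof. by apply: eq_bigr => j _; rewrite !mxE. Qed.

Lemma norm10 : norm1 0 = 0.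
Proof. by apply: big1 => j _; rewrite mxE normr0. Qed.

Lemma norm1N u : norm1 (- u) = norm1 u.
Proof. by apply: eq_bigr => j _; rewrite mxE normrN. Qed.

Lemma norm1_triangle u v : norm1 (u + v) <= norm1 u + norm1 v.
Proof.
rewrite /norm1 -big_split /=; apply: ler_sum => j _.
by rewrite mxE ler_normD.
Qed.

Lemma cross_vertex_sum_entry (w : 'I_n * bool -> R) j :
  (\sum_p w p *: cross_vertex R p) ord0 j =
  \sum_p w p * ((if p.2 then 1 else -1) * (p.1 == j)%:R).
Proof.
by rewrite summxE; apply: eq_bigr => p _; rewrite /cross_vertex /stdbasis !mxE.
Qed.

Lemma sum_pair_bool (F : 'I_n * bool -> R) :
  \sum_p F p = \sum_i (F (i, true) + F (i, false)).
Proof.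
rewrite (eq_bigr (fun p => F (p.1, p.2))); last by case.
rewrite -(pair_big predT predT (fun i b => F (i, b))) /=.
by apply: eq_bigr => i _; rewrite big_bool.
Qed.

Lemma crosspolytope_dim_gt0 x : @crosspolytope R n x -> (0 < n)%N.
Proof.
move=> [w [w0 [w1 _]]]; case: (posnP n) w w0 w1 => [n0|//].
subst n => w w0; rewrite big1 => [/eqP|]; first by rewrite eq_sym oner_eq0.
by move=> [[k hk] b].
Qed.

Lemma crosspolytope_sub_l1ball : @crosspolytope R n `<=` l1ball 0.
Proof.
move=> _ [w [w0 [w1 ->]]]; rewrite /l1ball /norm1 /= subr0.
have entry_le j : `|(\sum_p w p *: cross_vertex R p) ord0 j|
    <= \sum_p w p * (p.1 == j)%:R.
  rewrite cross_vertex_sum_entry; apply: (le_trans (ler_norm_sum _ _ _)).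
  apply: ler_sum => p _; rewrite !normrM (ger0_norm (w0 p)) normr_nat.
  by case: p.2; rewrite ?normrN normr1 mul1r.
apply: (le_trans (ler_sum _ (fun j _ => entry_le j))).
rewrite exchange_big /= (eq_bigr w) ?w1 // => p _.
rewrite -mulr_sumr (bigD1 p.1) //= eqxx big1 ?addr0 ?mulr1 //.
by move=> j /negbTE; rewrite eq_sym => ->.
Qed.

(* The weights are the positive and negative parts of the coordinates, with
   the missing mass 1 - |y|_1 spread equally over the two vertices +-e_0. *)
Lemma l1ball_sub_crosspolytope : (0 < n)%N -> l1ball 0 `<=` @crosspolytope R n.
Proof.
move=> n0 y; rewrite /l1ball /= subr0 => y1.
pose i0 := Ordinal n0.
pose slack := (1 - norm1 y) / 2.
pose w (p : 'I_n * bool) :=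
  Num.max ((if p.2 then 1 else -1) * y ord0 p.1) 0
  + (if p.1 == i0 then slack else 0).
have slack0 : 0 <= slack by rewrite /slack; lra.
have maxD (a : R) : Num.max a 0 + Num.max (- a) 0 = `|a|.
  by have [a0|a0] := lerP 0 a;
    [rewrite max_r ?ger0_norm | rewrite max_l ?ltr0_norm]; lra.
have maxB (a : R) : Num.max a 0 - Num.max (- a) 0 = a.
  by have [a0|a0] := lerP 0 a; [rewrite max_r | rewrite max_l]; lra.
exists w; split; [|split].
- move=> [i b]; apply: addr_ge0; first by rewrite le_max lexx orbT.
  by case: (_ == _).
- rewrite sum_pair_bool /w /=.
  under eq_bigr => i _ do rewrite mul1r mulN1r addrACA maxD.
  rewrite big_split /= [X in _ + X](bigD1 i0) //= [X in _ + (_ + X)]big1.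
    by rewrite addr0 /slack /norm1; lra.
  by move=> i /negbTE ->; rewrite addr0.
- apply/rowP => j; rewrite cross_vertex_sum_entry sum_pair_bool /w /=.
  rewrite (bigD1 j) //= big1 ?addr0 => [|i /negbTE ij]; last first.
    by rewrite eq_sym ij !mulr0 addr0.
  rewrite eqxx !mulr1 mul1r !mulN1r [y 0 j](_ : _ = y ord0 j) //.
  have := maxB (y ord0 j); case: (j == i0); lra.
Qed.

Lemma crosspolytopeE : (0 < n)%N -> @crosspolytope R n = l1ball 0.
Proof.
move=> n0; apply/seteqP; split;
  [exact: crosspolytope_sub_l1ball | exact: l1ball_sub_crosspolytope].
Qed.

Lemma translate_l1ball z : translate z (l1ball 0) = l1ball z.
Proof.
apply/seteqP; split=> [_ [y y1 <-]|x x1].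
  by move: y1; rewrite /l1ball /= subr0 addrC addKr.
by exists (x - z); rewrite /l1ball /= ?subr0 // addrC subrK.
Qed.

Lemma interior_l1ball c y : (0 < n)%N -> norm1 (y - c) < 1 ->
  interior (l1ball c) y.
Proof.
move=> n0 y1; apply/nbhs_ballP.
have npos : 0 < n%:R :> R by rewrite ltr0n.
pose e := (1 - norm1 (y - c)) / n%:R.
exists e => [|u /= [_ yu]]; first by apply: divr_gt0 => //; lra.
have entry_le j : `|(u - y) ord0 j| <= e.
  rewrite !mxE distrC; apply: ltW.
  by have := yu ord0 j; rewrite -ball_normE.
rewrite /l1ball /=.
have -> : 1 = norm1 (y - c) + e * n%:R.
  by rewrite /e mulfVK ?gt_eqF //; lra.
rewrite -(subrKA y) addrC.
apply: (le_trans (norm1_triangle _ _)); rewrite lerD2l.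
apply: (le_trans (ler_sum _ (fun j _ => entry_le j))).
by rewrite sumr_const card_ord mulr_natr.
Qed.

Lemma l1ball_boundary c x : (0 < n)%N -> l1ball c x ->
  ~ interior (l1ball c) x -> norm1 (x - c) = 1.
Proof.
move=> n0 x1 xbd; apply/eqP; rewrite eq_le x1 /=.
by rewrite leNgt; apply/negP => /(interior_l1ball n0).
Qed.

Lemma norm1_split_coords x z :
  (forall j, x ord0 j = 0 \/ x ord0 j = z ord0 j) ->
  norm1 x + norm1 (x - z) = norm1 z.
Proof.
move=> xj; rewrite /norm1 -big_split /=; apply: eq_bigr => j _.
by rewrite !mxE; case: (xj j) => ->;
  rewrite ?subrr ?sub0r ?normrN ?normr0 ?addr0 ?add0r.
Qed.

Lemma sgr_dot_eq_norm1 u z : norm1 u + norm1 (u - z) <= norm1 z ->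
  \sum_j Num.sg (z ord0 j) * u ord0 j = norm1 u.
Proof.
move=> uz; pose d j := `|u ord0 j| + `|u ord0 j - z ord0 j| - `|z ord0 j|.
have d_ge0 j : 0 <= d j.
  have := ler_distD (u ord0 j) (z ord0 j) 0.
  by rewrite !subr0 subr_ge0 distrC addrC.
have d_sum : \sum_j d j = norm1 u + norm1 (u - z) - norm1 z.
  by rewrite sumrB big_split norm1B.
have d_eq0 : \sum_j d j = 0.
  by apply/eqP; rewrite eq_le sumr_ge0 ?andbT // d_sum; lra.
have dj0 := psumr_eq0P (fun j _ => d_ge0 j) d_eq0.
apply: eq_bigr => j _; apply: sgr_mul_between.
by have := dj0 j isT; rewrite /d; lra.
Qed.

Lemma l1ball_cap_sub_hyperplane z : norm1 z = 2 ->
  l1ball 0 `&` l1ball z `<=` [set u | u *m (map_mx Num.sg z)^T = 1%:M].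
Proof.
move=> z2 u [u1 uz1]; rewrite /l1ball /= subr0 in u1 uz1.
have tri := norm1_triangle u (z - u).
rewrite addrC subrK -opprB norm1N z2 in tri.
apply/matrixP => i k; rewrite !ord1 !mxE /= mulr1n.
rewrite (eq_bigr (fun j => Num.sg (z ord0 j) * u ord0 j)); last first.
  by move=> j _; rewrite !mxE mulrC.
rewrite sgr_dot_eq_norm1 ?z2; lra.
Qed.

End L1Ball.

Lemma full_dim_sub_hyperplane (R : realType) (n : nat) (S : set 'rV[R]_n)
    (c : 'cV[R]_n) (a : 'M[R]_1) :
  full_dim S -> S `<=` [set u | u *m c = a] -> c = 0.
Proof.
move=> [p [Sp]]; set M := \matrix_(i < n) _; rewrite row_free_unit => Munit Sc.
rewrite -(mulKmx Munit c); suff -> : M *m c = 0 by rewrite mulmx0.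
apply/row_matrixP => i; rewrite row0 row_mul rowK mulmxBl.
by rewrite (Sc _ (Sp _)) (Sc _ (Sp _)) subrr.
Qed.

Theorem lemma6p3 (R : realType) (n : nat) (z : 'rV[R]_n) :
  full_dim (@crosspolytope R n `&` translate z (@crosspolytope R n)) ->
  (@crosspolytope R n `&` translate z (@crosspolytope R n)) `\`
    (interior (@crosspolytope R n) `|` interior (translate z (@crosspolytope R n)))
  `<=`
  (@crosspolytope R n `&` translate z (@crosspolytope R n)) `\`
    \bigcap_(i in [set: 'I_n])
      (@coord_hyperplane R n i `|` translate z (@coord_hyperplane R n i)).
Proof.
move=> hfull x [[Dx Tx] xbd]; split=> // xcap.
have n0 := crosspolytope_dim_gt0 Dx.
move: hfull Dx Tx xbd; rewrite crosspolytopeE // translate_l1ball.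
move=> hfull Dx Tx /not_orP[Dbd Tbd].
have xj j : x ord0 j = 0 \/ x ord0 j = z ord0 j.
  have [|[y y0 <-]] := xcap j I; [by left | by right; rewrite mxE y0 addr0].
have z2 : norm1 z = 2.
  rewrite -(norm1_split_coords xj) -[in norm1 x](subr0 x).
  by rewrite (l1ball_boundary n0 Dx Dbd) (l1ball_boundary n0 Tx Tbd).
have /matrixP sgz0 := full_dim_sub_hyperplane hfull (l1ball_cap_sub_hyperplane z2).
suff z0 : z = 0 by move: z2; rewrite z0 norm10; lra.
apply/rowP => j; have := sgz0 j ord0; rewrite !mxE => /eqP.
by rewrite sgr_eq0 => /eqP.
Qed.
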